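(* If $F$ has a derivative $F'(x_0)$ at a nega-$\tilde Q$-irrational point $x_0=\Delta^{-\tilde Q}_{i_1(x_0)i_2(x_0)\dots}$, then $$F'(x_0)=\lim_{n\to\infty}\prod_{j=1}^{n}\frac{\tilde p_{i_j(x_0),j}}{\tilde q_{i_j(x_0),j}}=\prod_{n=1}^{\infty}\frac{\tilde p_{i_n(x_0),n}}{\tilde q_{i_n(x_0),n}}.$$
   Context: Let $(m_n)_{n\ge1}$ be finite nonnegative integers and $\tilde Q=\|q_{i,n}\|$ ($i\in\{0,\dots,m_n\}$) with $q_{i,n}>0$, $\sum_{i}q_{i,n}=1$ for all $n$, and $\prod_n q_{i_n,n}=0$ for every digit sequence $(i_n)$. Put $a_{0,n}=0$, $a_{i,n}=\sum_{l<i}q_{l,n}$; $\Delta^{\tilde Q}_{j_1j_2\dots}=a_{j_1,1}+\sum_{n\ge2}a_{j_n,n}\prod_{l<n}q_{j_l,l}$. For odd $n$: $\tilde q_{i,n}=q_{i,n}$; for even $n$: $\tilde q_{i,n}=q_{m_n-i,n}$. The nega-$\tilde Q$-representation $x=\Delta^{-\tilde Q}_{i_1i_2\dots}$ means $x=\Delta^{\tilde Q}_{i_1[m_2-i_2]i_3[m_4-i_4]\dots}$; every $x\in[0,1]$ has one; numbers $\Delta^{-\tilde Q}_{i_1\dots i_nm_{n+1}0m_{n+3}0\dots}=\Delta^{-\tilde Q}_{i_1\dots[i_n-1]0m_{n+2}0m_{n+4}\dots}$ ($i_n\ne0$) have two representations and are nega-$\tilde Q$-rational; all other points have a unique representation and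 are nega-$\tilde Q$-irrational. Let $P=\|p_{i,n}\|$ have the same shape with $p_{i,n}\in(-1,1)$, $\sum_ip_{i,n}=1$, $\prod_n|p_{i_n,n}|=0$ for every digit sequence, $0<\sum_{i<c}p_{i,n}<1$ for $c\in\{1,\dots,m_n\}$. Put $\beta_{0,n}=0$, $\beta_{c,n}=\sum_{i<c}p_{i,n}$; for odd $n$: $\tilde p_{i,n}=p_{i,n}$, $\tilde\beta_{i,n}=\beta_{i,n}$; for even $n$: $\tilde p_{i,n}=p_{m_n-i,n}$, $\tilde\beta_{i,n}=\beta_{m_n-i,n}$. $F(x)=\beta_{i_1,1}+\sum_{k\ge2}\tilde\beta_{i_k,k}\prod_{j<k}\tilde p_{i_j,j}$ for $x=\Delta^{-\tilde Q}_{i_1i_2\dots}$. *)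

From Stdlib Require Import Reals.
From Coquelicot Require Import Coquelicot.
Open Scope R_scope.

(* Conventions: positions n are 1-based (n >= 1); the value of any
   sequence at index 0 is irrelevant.  Matrices are functions
   [q i n] = q_{i,n}; digit sequences are [d : nat -> nat]. *)

Fixpoint psum (f : nat -> R) (c : nat) : R :=
  match c with O => 0 | S c' => psum f c' + f c' end.

Fixpoint prodR (f : nat -> R) (N : nat) : R :=
  match N with O => 1 | S N' => prodR f N' * f (S N') end.

Definition valid_digits (m : nat -> nat) (d : nat -> nat) : Prop :=
  forall n, (1 <= n)%nat -> (d n <= m n)%nat.

Definition Qmatrix (m : nat -> nat) (q : nat -> nat -> R) : Prop :=
  (forall n i, (1 <= n)%nat -> (i <= m n)%nat -> 0 < q i n) /\
  (forall n, (1 <= n)%nat -> psum (fun i => q i n) (S (m n)) = 1) /\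
  (forall d, valid_digits m d ->
     is_lim_seq (fun N => prodR (fun n => q (d n) n) N) 0).

Definition Pmatrix (m : nat -> nat) (p : nat -> nat -> R) : Prop :=
  (forall n i, (1 <= n)%nat -> (i <= m n)%nat -> -1 < p i n < 1) /\
  (forall n, (1 <= n)%nat -> psum (fun i => p i n) (S (m n)) = 1) /\
  (forall d, valid_digits m d ->
     is_lim_seq (fun N => prodR (fun n => Rabs (p (d n) n)) N) 0) /\
  (forall n c, (1 <= n)%nat -> (1 <= c <= m n)%nat ->
     0 < psum (fun i => p i n) c < 1).

Definition a_coef (q : nat -> nat -> R) (i n : nat) : R := psum (fun l => q l n) i.

Definition DeltaQ (q : nat -> nat -> R) (j : nat -> nat) : R :=
  Series (fun k => let n := S k in
            a_coef q (j n) n * prodR (fun l => q (j l) l) (pred n)).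

(* digits of the Q~-representation corresponding to nega-digits d:
   i_n for odd n, m_n - i_n for even n *)
Definition nega_digits (m : nat -> nat) (d : nat -> nat) : nat -> nat :=
  fun n => if Nat.odd n then d n else (m n - d n)%nat.

Definition DeltaNegaQ (m : nat -> nat) (q : nat -> nat -> R) (d : nat -> nat) : R :=
  DeltaQ q (nega_digits m d).

Definition tilde (m : nat -> nat) (r : nat -> nat -> R) (i n : nat) : R :=
  if Nat.odd n then r i n else r (m n - i)%nat n.

Definition beta (p : nat -> nat -> R) (c n : nat) : R := psum (fun i => p i n) c.

Definition Fvalue (m : nat -> nat) (p : nat -> nat -> R) (d : nat -> nat) : R :=
  Series (fun k0 => let k := S k0 in
            tilde m (beta p) (d k) k * prodR (fun j => tilde m p (d j) j) (pred k)).

Definition rational_tail (m : nat -> nat) (d : nat -> nat) (n : nat) : nat -> nat :=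
  fun k => if (k <=? n)%nat then d k
           else if Nat.odd (k - n) then m k else 0%nat.

Definition nega_rational (m : nat -> nat) (q : nat -> nat -> R) (x : R) : Prop :=
  exists d n, valid_digits m d /\ (1 <= n)%nat /\ d n <> 0%nat /\
    x = DeltaNegaQ m q (rational_tail m d n).

Definition has_derivative_on01 (F : R -> R) (x0 l : R) : Prop :=
  filterlim (fun x => (F x - F x0) / (x - x0))
    (within (fun x => 0 <= x <= 1 /\ x <> x0) (locally x0)) (locally l).

From Stdlib Require Import Reals Lra Lia.
From Coquelicot Require Import Coquelicot.
Open Scope R_scope.

(* Pass to the Q~-digits D of x0 (the nega-digits with even positions reflected),
   in which tilde q and tilde p become q and p.  The n-th Q~-cylinder of x0 has the
   endpoints Delta^Q(D_1...D_n 0 0 ...) and Delta^Q(D_1...D_n m m ...), at distance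
   prod_{j<=n} q_{D_j,j}, and F sends them to the corresponding Delta^P-values, at
   distance prod_{j<=n} p_{D_j,j}.  Hence the products of ratios are slopes of chords
   of F over intervals that contain x0 and shrink to it, and such slopes converge to
   F'(x0). *)

Lemma sum_n_psum (t : nat -> R) (N : nat) : sum_n t N = psum t (S N).
Proof.
  induction N as [|N IH].
  - rewrite sum_O; simpl; ring.
  - rewrite sum_Sn, IH; simpl; unfold plus; simpl; ring.
Qed.

Lemma is_series_psumE (t : nat -> R) (l : R) :
  is_series t l <-> is_lim_seq (psum t) l.
Proof.
  split; intro H.
  - apply is_lim_seq_incr_1, (is_lim_seq_ext (sum_n t)); [|exact H].
    intro N; apply sum_n_psum.
  - apply is_lim_seq_incr_1 in H.
    apply (is_lim_seq_ext (fun N => psum t (S N)) (sum_n t)) in H; [exact H|].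
    intro N; symmetry; apply sum_n_psum.
Qed.

Lemma psum_telescope (t P : nat -> R) (n N : nat) :
  (forall k, (n <= k)%nat -> t k = P k - P (S k)) -> (n <= N)%nat ->
  psum t N = psum t n + P n - P N.
Proof.
  intros Ht HN; induction HN as [|N HN IH]; simpl; [ring|].
  rewrite IH, (Ht N HN); ring.
Qed.

Lemma is_series_telescope (t P : nat -> R) (n : nat) :
  is_lim_seq P 0 -> (forall k, (n <= k)%nat -> t k = P k - P (S k)) ->
  is_series t (psum t n + P n).
Proof.
  intros HP Ht; apply is_series_psumE.
  apply (is_lim_seq_ext_loc (fun N => psum t n + P n - P N)).
  - exists n; intros N HN; symmetry; exact (psum_telescope t P n N Ht HN).
  - pose proof (is_lim_seq_minus' _ _ _ _ (is_lim_seq_const (psum t n + P n)) HP) as H.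
    rewrite Rminus_0_r in H; exact H.
Qed.

Lemma psum_ext (f g : nat -> R) (N : nat) :
  (forall j, (j < N)%nat -> f j = g j) -> psum f N = psum g N.
Proof.
  induction N as [|N IH]; intro H; simpl; [reflexivity|].
  rewrite IH by (intros; apply H; lia); rewrite H by lia; reflexivity.
Qed.

Lemma psum_le_psum (f : nat -> R) (c c' : nat) :
  (forall i, (i < c')%nat -> 0 <= f i) -> (c <= c')%nat -> psum f c <= psum f c'.
Proof.
  intros Hf H; induction H as [|c' H IH]; simpl; [lra|].
  assert (0 <= f c') by (apply Hf; lia).
  assert (psum f c <= psum f c') by (apply IH; intros; apply Hf; lia).
  lra.
Qed.

Lemma prodR_ext (f g : nat -> R) (N : nat) :
  (forall j, (1 <= j <= N)%nat -> f j = g j) -> prodR f N = prodR g N.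
Proof.
  induction N as [|N IH]; intro H; simpl; [reflexivity|].
  rewrite IH by (intros; apply H; lia); rewrite H by lia; reflexivity.
Qed.

Lemma prodR_Rabs (f : nat -> R) (N : nat) :
  prodR (fun j => Rabs (f j)) N = Rabs (prodR f N).
Proof.
  induction N as [|N IH]; simpl; [now rewrite Rabs_R1|].
  now rewrite IH, Rabs_mult.
Qed.

Lemma prodR_div (f g : nat -> R) (N : nat) :
  prodR (fun j => f j / g j) N = prodR f N / prodR g N.
Proof.
  induction N as [|N IH]; simpl; [field|].
  rewrite IH; unfold Rdiv; rewrite Rinv_mult; ring.
Qed.

Lemma prodR_gt0 (f : nat -> R) (N : nat) :
  (forall j, (1 <= j <= N)%nat -> 0 < f j) -> 0 < prodR f N.
Proof.
  induction N as [|N IH]; intro H; simpl; [lra|].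
  apply Rmult_lt_0_compat; [apply IH; intros|]; apply H; lia.
Qed.

Lemma has_derivative_on01_approx (F : R -> R) (x0 l : R) :
  has_derivative_on01 F x0 l -> forall eps, 0 < eps ->
  exists delta : posreal, forall y, 0 <= y <= 1 -> Rabs (y - x0) < delta ->
    Rabs (F y - F x0 - l * (y - x0)) <= eps * Rabs (y - x0).
Proof.
  intros Hder eps Heps.
  assert (Hball : locally l (fun z => Rabs (z - l) < eps))
    by (exists (mkposreal eps Heps); intros z Hz; exact Hz).
  destruct (Hder _ Hball) as [delta Hdelta]; exists delta; intros y Hy Hyx.
  destruct (Req_dec y x0) as [->|Hne].
  - replace (F x0 - F x0 - l * (x0 - x0)) with 0 by ring.
    replace (x0 - x0) with 0 by ring; rewrite Rabs_R0; lra.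
  - specialize (Hdelta y Hyx (conj Hy Hne)); simpl in Hdelta.
    replace (F y - F x0 - l * (y - x0))
      with (((F y - F x0) / (y - x0) - l) * (y - x0)) by (field; lra).
    rewrite Rabs_mult; apply Rmult_le_compat_r; [apply Rabs_pos | lra].
Qed.

Lemma chord_slope_lim (F : R -> R) (x0 l : R) (a b : nat -> R) :
  has_derivative_on01 F x0 l ->
  (forall n, 0 <= a n <= x0 /\ x0 <= b n <= 1 /\ a n < b n) ->
  is_lim_seq (fun n => b n - a n) 0 ->
  is_lim_seq (fun n => (F (b n) - F (a n)) / (b n - a n)) l.
Proof.
  intros Hder Hab Hlen; apply is_lim_seq_spec; intros [eps Heps]; simpl.
  destruct (has_derivative_on01_approx F x0 l Hder (eps / 2)) as [delta Happrox]; [lra|].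
  apply is_lim_seq_spec in Hlen; destruct (Hlen delta) as [N0 HN0].
  exists N0; intros n Hn; specialize (HN0 n Hn).
  destruct (Hab n) as [Ha [Hb Hlt]].
  rewrite Rminus_0_r, Rabs_pos_eq in HN0 by lra.
  assert (Ea := Happrox (a n) ltac:(lra) ltac:(rewrite Rabs_left1; lra)).
  assert (Eb := Happrox (b n) ltac:(lra) ltac:(rewrite Rabs_pos_eq; lra)).
  rewrite (Rabs_left1 (a n - x0)) in Ea by lra.
  rewrite (Rabs_pos_eq (b n - x0)) in Eb by lra.
  replace ((F (b n) - F (a n)) / (b n - a n) - l)
    with ((F (b n) - F x0 - l * (b n - x0) - (F (a n) - F x0 - l * (a n - x0)))
          / (b n - a n)) by (field; lra).
  rewrite Rabs_div, (Rabs_pos_eq (b n - a n)) by lra.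
  apply Rmult_lt_reg_r with (b n - a n); [lra|].
  unfold Rdiv; rewrite Rmult_assoc, Rinv_l, Rmult_1_r by lra.
  unfold Rminus at 1; eapply Rle_lt_trans; [apply Rabs_triang|].
  rewrite Rabs_Ropp; nra.
Qed.

Definition DeltaQ_term (r : nat -> nat -> R) (X : nat -> nat) (k : nat) : R :=
  a_coef r (X (S k)) (S k) * prodR (fun l => r (X l) l) k.

Lemma DeltaQ_is_series (r : nat -> nat -> R) (X : nat -> nat) (v : R) :
  is_series (DeltaQ_term r X) v -> DeltaQ r X = v.
Proof. exact (is_series_unique (DeltaQ_term r X) v). Qed.

Lemma DeltaQ_ext (r : nat -> nat -> R) (X Y : nat -> nat) :
  (forall k, (1 <= k)%nat -> X k = Y k) -> DeltaQ r X = DeltaQ r Y.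
Proof.
  intro H; unfold DeltaQ; apply Series_ext; intro k; simpl.
  rewrite H by lia; f_equal; apply prodR_ext; intros; rewrite H by lia; reflexivity.
Qed.

Definition splice (D E : nat -> nat) (n k : nat) : nat :=
  if (k <=? n)%nat then D k else E k.

Lemma splice_le (D E : nat -> nat) (n k : nat) : (k <= n)%nat -> splice D E n k = D k.
Proof. intro H; unfold splice; now rewrite (proj2 (Nat.leb_le k n) H). Qed.

Lemma splice_gt (D E : nat -> nat) (n k : nat) : (n < k)%nat -> splice D E n k = E k.
Proof. intro H; unfold splice; now rewrite (proj2 (Nat.leb_gt k n) H). Qed.

Lemma valid_splice (m D E : nat -> nat) (n : nat) :
  valid_digits m D -> valid_digits m E -> valid_digits m (splice D E n).
Proof. intros HD HE k Hk; unfold splice; destruct (k <=? n)%nat; auto. Qed.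

Lemma valid_digits_zero (m : nat -> nat) : valid_digits m (fun _ => 0%nat).
Proof. intros k _; lia. Qed.

Lemma valid_digits_max (m : nat -> nat) : valid_digits m m.
Proof. intros k _; lia. Qed.

Lemma prodR_splice (r : nat -> nat -> R) (D E : nat -> nat) (n : nat) :
  prodR (fun l => r (splice D E n l) l) n = prodR (fun l => r (D l) l) n.
Proof. apply prodR_ext; intros; rewrite splice_le by lia; reflexivity. Qed.

Lemma psum_DeltaQ_term_splice (r : nat -> nat -> R) (D E : nat -> nat) (n : nat) :
  psum (DeltaQ_term r (splice D E n)) n = psum (DeltaQ_term r D) n.
Proof.
  apply psum_ext; intros k Hk; unfold DeltaQ_term.
  rewrite splice_le by lia; f_equal.
  apply prodR_ext; intros; rewrite splice_le by lia; reflexivity.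
Qed.

Lemma DeltaQ_splice_zero (r : nat -> nat -> R) (D : nat -> nat) (n : nat) :
  DeltaQ r (splice D (fun _ => 0%nat) n) = psum (DeltaQ_term r D) n.
Proof.
  apply DeltaQ_is_series; rewrite <- (psum_DeltaQ_term_splice r D (fun _ => 0%nat) n).
  rewrite <- Rplus_0_r.
  apply (is_series_telescope _ (fun _ => 0)); [apply is_lim_seq_const|].
  intros k Hk; unfold DeltaQ_term; rewrite splice_gt by lia.
  unfold a_coef; simpl; ring.
Qed.

(* A tail of maximal digits m_k fills each remaining row: a_{m_k,k} = 1 - r_{m_k,k}. *)
Lemma DeltaQ_splice_max (m : nat -> nat) (r : nat -> nat -> R) (D : nat -> nat) (n : nat) :
  (forall k, (1 <= k)%nat -> psum (fun i => r i k) (S (m k)) = 1) ->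
  (forall X, valid_digits m X -> is_lim_seq (fun N => prodR (fun l => r (X l) l) N) 0) ->
  valid_digits m D ->
  DeltaQ r (splice D m n) = psum (DeltaQ_term r D) n + prodR (fun l => r (D l) l) n.
Proof.
  intros Hrow Hprod HD; apply DeltaQ_is_series.
  rewrite <- (psum_DeltaQ_term_splice r D m n), <- (prodR_splice r D m n).
  apply is_series_telescope.
  { apply Hprod, valid_splice; [exact HD | apply valid_digits_max]. }
  intros k Hk; unfold DeltaQ_term, a_coef; simpl; rewrite splice_gt by lia.
  specialize (Hrow (S k) ltac:(lia)); simpl in Hrow.
  replace (psum (fun l => r l (S k)) (m (S k))) with (1 - r (m (S k)) (S k)) by lra; ring.
Qed.

Lemma DeltaQ_splice_rise (m : nat -> nat) (r : nat -> nat -> R) (D : nat -> nat) (n : nat) :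
  (forall k, (1 <= k)%nat -> psum (fun i => r i k) (S (m k)) = 1) ->
  (forall X, valid_digits m X -> is_lim_seq (fun N => prodR (fun l => r (X l) l) N) 0) ->
  valid_digits m D ->
  DeltaQ r (splice D m n) - DeltaQ r (splice D (fun _ => 0%nat) n) =
  prodR (fun l => r (D l) l) n.
Proof.
  intros Hrow Hprod HD.
  rewrite DeltaQ_splice_zero, (DeltaQ_splice_max m) by assumption; ring.
Qed.

Lemma DeltaQ_term_bounds (m : nat -> nat) (q : nat -> nat -> R) (D : nat -> nat) (k : nat) :
  Qmatrix m q -> valid_digits m D ->
  0 <= DeltaQ_term q D k <=
  prodR (fun l => q (D l) l) k - prodR (fun l => q (D l) l) (S k).
Proof.
  intros [Hpos [Hrow _]] HD.
  assert (HDk := HD (S k) ltac:(lia)).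
  assert (HP : 0 < prodR (fun l => q (D l) l) k)
    by (apply prodR_gt0; intros j Hj; apply Hpos, HD; lia).
  assert (Hnonneg : forall i, (i < S (m (S k)))%nat -> 0 <= q i (S k))
    by (intros i Hi; left; apply Hpos; lia).
  assert (Ha : 0 <= a_coef q (D (S k)) (S k)).
  { change 0 with (psum (fun l => q l (S k)) 0); unfold a_coef.
    apply psum_le_psum; [intros i Hi; apply Hnonneg | ]; lia. }
  assert (Haq : a_coef q (D (S k)) (S k) + q (D (S k)) (S k) <= 1).
  { rewrite <- (Hrow (S k)) by lia.
    apply (psum_le_psum (fun i => q i (S k)) (S (D (S k)))); [exact Hnonneg | lia]. }
  unfold DeltaQ_term; simpl; split; nra.
Qed.

Lemma DeltaQ_cylinder_bounds (m : nat -> nat) (q : nat -> nat -> R) (D : nat -> nat) (n : nat) :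
  Qmatrix m q -> valid_digits m D ->
  psum (DeltaQ_term q D) n <= DeltaQ q D <=
  psum (DeltaQ_term q D) n + prodR (fun l => q (D l) l) n.
Proof.
  intros HQ HD; set (P := fun N => prodR (fun l => q (D l) l) N).
  assert (Hterm : forall k, 0 <= DeltaQ_term q D k <= P k - P (S k))
    by (intro k; exact (DeltaQ_term_bounds m q D k HQ HD)).
  assert (HP : forall N, 0 <= P N)
    by (intro N; left; apply prodR_gt0; intros j Hj; apply (proj1 HQ), HD; lia).
  assert (Hsum : is_lim_seq (psum (DeltaQ_term q D)) (DeltaQ q D)).
  { apply is_series_psumE, Series_correct.
    apply (@ex_series_le R_AbsRing R_CompleteNormedModule _ (fun k => P k - P (S k))).
    - intro k; unfold norm; simpl; unfold abs; simpl.
      rewrite Rabs_pos_eq; apply Hterm.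
    - exists (psum (fun k => P k - P (S k)) O + P O).
      apply is_series_telescope; [apply (proj2 (proj2 HQ)), HD | reflexivity]. }
  split.
  - apply (is_lim_seq_le_loc (fun _ => psum (DeltaQ_term q D) n) _ _ _)
      with (2 := is_lim_seq_const _) (3 := Hsum).
    exists n; intros N HN; apply psum_le_psum; [intros; apply Hterm | exact HN].
  - apply (is_lim_seq_le_loc _ (fun _ => psum (DeltaQ_term q D) n + P n) _ _)
      with (2 := Hsum) (3 := is_lim_seq_const _).
    exists n; intros N HN; specialize (HP N).
    enough (psum (DeltaQ_term q D) N - P n <= psum (DeltaQ_term q D) n - P N) by lra.
    induction HN as [|N HN IH]; [lra|]; simpl.
    specialize (Hterm N); lra.
Qed.

Lemma DeltaQ_in_01 (m : nat -> nat) (q : nat -> nat -> R) (X : nat -> nat) :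
  Qmatrix m q -> valid_digits m X -> 0 <= DeltaQ q X <= 1.
Proof.
  intros HQ HX; pose proof (DeltaQ_cylinder_bounds m q X O HQ HX) as H.
  simpl in H; lra.
Qed.

Lemma DeltaQ_cylinder (m : nat -> nat) (q : nat -> nat -> R) (D : nat -> nat) (n : nat) :
  Qmatrix m q -> valid_digits m D ->
  let lo := DeltaQ q (splice D (fun _ => 0%nat) n) in
  let hi := DeltaQ q (splice D m n) in
  0 <= lo <= DeltaQ q D /\ DeltaQ q D <= hi <= 1 /\ lo < hi.
Proof.
  intros HQ HD lo hi.
  assert (Hlo : valid_digits m (splice D (fun _ => 0%nat) n))
    by (apply valid_splice; [exact HD | apply valid_digits_zero]).
  assert (Hhi : valid_digits m (splice D m n))
    by (apply valid_splice; [exact HD | apply valid_digits_max]).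
  pose proof (DeltaQ_in_01 m q _ HQ Hlo) as Hlo01.
  pose proof (DeltaQ_in_01 m q _ HQ Hhi) as Hhi01.
  pose proof (DeltaQ_cylinder_bounds m q D n HQ HD) as Hx.
  assert (Hlen : hi - lo = prodR (fun l => q (D l) l) n)
    by (apply DeltaQ_splice_rise; [apply HQ | apply HQ | exact HD]).
  assert (0 < prodR (fun l => q (D l) l) n)
    by (apply prodR_gt0; intros j Hj; apply HQ, HD; lia).
  unfold lo, hi in *; rewrite DeltaQ_splice_zero in *; lra.
Qed.

Lemma nega_digitsK (m X : nat -> nat) (k : nat) :
  valid_digits m X -> (1 <= k)%nat -> nega_digits m (nega_digits m X) k = X k.
Proof.
  intros HX Hk; unfold nega_digits; destruct (Nat.odd k); [reflexivity|].
  specialize (HX k Hk); lia.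
Qed.

Lemma valid_nega_digits (m X : nat -> nat) :
  valid_digits m X -> valid_digits m (nega_digits m X).
Proof. intros HX k Hk; unfold nega_digits; destruct (Nat.odd k); [auto | lia]. Qed.

Lemma tilde_nega_digits (m : nat -> nat) (r : nat -> nat -> R) (d : nat -> nat) (j : nat) :
  tilde m r (d j) j = r (nega_digits m d j) j.
Proof. unfold tilde, nega_digits; destruct (Nat.odd j); reflexivity. Qed.

Lemma Fvalue_DeltaQ (m : nat -> nat) (p : nat -> nat -> R) (d : nat -> nat) :
  Fvalue m p d = DeltaQ p (nega_digits m d).
Proof.
  unfold Fvalue, DeltaQ; apply Series_ext; intro k; simpl; f_equal.
  - unfold tilde, beta, a_coef, nega_digits; destruct (Nat.odd (S k)); reflexivity.
  - apply prodR_ext; intros; apply tilde_nega_digits.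
Qed.

Lemma F_DeltaQ (m : nat -> nat) (q p : nat -> nat -> R) (F : R -> R) (X : nat -> nat) :
  (forall d, valid_digits m d -> F (DeltaNegaQ m q d) = Fvalue m p d) ->
  valid_digits m X -> F (DeltaQ q X) = DeltaQ p X.
Proof.
  intros HF HX.
  rewrite (DeltaQ_ext q X (nega_digits m (nega_digits m X)))
    by (intros; symmetry; apply nega_digitsK; auto).
  change (F (DeltaNegaQ m q (nega_digits m X)) = DeltaQ p X).
  rewrite HF, Fvalue_DeltaQ by (apply valid_nega_digits; auto).
  apply DeltaQ_ext; intros; apply nega_digitsK; auto.
Qed.

Lemma Pmatrix_prodR_lim (m : nat -> nat) (p : nat -> nat -> R) (X : nat -> nat) :
  Pmatrix m p -> valid_digits m X ->
  is_lim_seq (fun N => prodR (fun l => p (X l) l) N) 0.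
Proof.
  intros [_ [_ [Hlim _]]] HX; apply is_lim_seq_abs_0.
  apply (is_lim_seq_ext (fun N => prodR (fun l => Rabs (p (X l) l)) N)).
  - intro N; apply prodR_Rabs.
  - exact (Hlim X HX).
Qed.

Theorem mainTheorem8
  (m : nat -> nat) (q p : nat -> nat -> R) (F : R -> R)
  (HQ : Qmatrix m q) (HP : Pmatrix m p)
  (HF : forall d, valid_digits m d -> F (DeltaNegaQ m q d) = Fvalue m p d)
  (d : nat -> nat) (Hd : valid_digits m d)
  (Hirr : ~ nega_rational m q (DeltaNegaQ m q d))
  (l : R) (Hder : has_derivative_on01 F (DeltaNegaQ m q d) l) :
  is_lim_seq (fun N => prodR (fun j => tilde m p (d j) j / tilde m q (d j) j) N) l.
Proof.
  set (D := nega_digits m d); assert (HD : valid_digits m D) by now apply valid_nega_digits.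
  set (lo := fun n => DeltaQ q (splice D (fun _ => 0%nat) n)).
  set (hi := fun n => DeltaQ q (splice D m n)).
  assert (Hlen : forall n, hi n - lo n = prodR (fun l => q (D l) l) n)
    by (intro n; apply DeltaQ_splice_rise; [apply HQ | apply HQ | exact HD]).
  apply (is_lim_seq_ext (fun n => (F (hi n) - F (lo n)) / (hi n - lo n))).
  { intro n; rewrite Hlen; unfold lo, hi.
    rewrite !(F_DeltaQ m q p F _ HF)
      by (apply valid_splice; auto using valid_digits_zero, valid_digits_max).
    rewrite DeltaQ_splice_rise, prodR_div; [| apply HP | | exact HD].
    - f_equal; apply prodR_ext; intros; symmetry; apply tilde_nega_digits.
    - intros X HX; exact (Pmatrix_prodR_lim m p X HP HX). }
  apply (chord_slope_lim F (DeltaQ q D)); [exact Hder | |].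
  - intro n; exact (DeltaQ_cylinder m q D n HQ HD).
  - apply (is_lim_seq_ext (fun n => prodR (fun l => q (D l) l) n));
      [intro n; symmetry; apply Hlen | apply HQ, HD].
Qed.
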